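(* Fix $q\in[1,\infty)$. Let $(\mathcal X,d)$ be a metric space with the $q$-barycenter property: for every $K\ge1$, $\boldsymbol w\in\Delta^{K-1}$ and $\boldsymbol a\in\mathcal X^K$ the function $C\mapsto\sum_{s=1}^Kw_sd^q(a_s,C)$ attains its minimum on $\mathcal X$. Let $\boldsymbol a=(a_1,\dots,a_K)\in\mathcal X^K$, $\boldsymbol w\in\Delta^{K-1}$ and $C_{\boldsymbol a}\in\arg\min_C\sum_sw_sd^q(a_s,C)$. Fix $\alpha\in[0,1]$ and assume $\boldsymbol b\in\mathcal X^K$ satisfies, for all $s$, $$d(a_s,C_{\boldsymbol a})=d(a_s,b_s)+d(b_s,C_{\boldsymbol a}),\qquad d(b_s,a_s)=(1-\alpha^{1/q})\,d(a_s,C_{\boldsymbol a}).$$ Then $\boldsymbol b$ solves $$\inf_{\boldsymbol b'\in\mathcal X^K}\Big\{\sum_{s=1}^Kw_sd^q(b'_s,a_s)\;:\;\min_{C\in\mathcal X}\sum_{s=1}^Kw_sd^q(b'_s,C)\le\alpha\sum_{s=1}^Kw_sd^q(a_s,C_{\boldsymbol a})\Big\}.$$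
   Context: $\Delta^{K-1}$ is the probability simplex in $\mathbb R^K$. *)

From mathcomp Require Import all_boot all_order all_algebra.
From mathcomp Require Import all_classical all_reals all_analysis.
Set Implicit Arguments. Unset Strict Implicit. Unset Printing Implicit Defensive.
Import Order.TTheory GRing.Theory Num.Theory.
Local Open Scope ring_scope.

Definition is_metric (R : realType) (X : Type) (d : X -> X -> R) : Prop :=
  (forall x y, 0 <= d x y) /\
  (forall x y, d x y = 0 <-> x = y) /\
  (forall x y, d x y = d y x) /\
  (forall x y z, d x z <= d x y + d y z).

Definition in_simplex (R : realType) (K : nat) (w : 'I_K -> R) : Prop :=
  (forall s, 0 <= w s) /\ \sum_(s < K) w s = 1.

Definition bary_cost (R : realType) (X : Type) (d : X -> X -> R) (q : R)
    (K : nat) (w : 'I_K -> R) (a : 'I_K -> X) (C : X) : R :=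
  \sum_(s < K) w s * powR (d (a s) C) q.

Definition is_bary_argmin (R : realType) (X : Type) (d : X -> X -> R) (q : R)
    (K : nat) (w : 'I_K -> R) (a : 'I_K -> X) (C : X) : Prop :=
  forall C' : X, bary_cost d q w a C <= bary_cost d q w a C'.

Definition q_barycenter_property (R : realType) (X : Type) (d : X -> X -> R)
    (q : R) : Prop :=
  forall (K : nat) (w : 'I_K -> R) (a : 'I_K -> X),
    (1 <= K)%N -> in_simplex w -> exists C : X, is_bary_argmin d q w a C.

Definition feasible (R : realType) (X : Type) (d : X -> X -> R) (q : R)
    (K : nat) (w : 'I_K -> R) (bound : R) (b' : 'I_K -> X) : Prop :=
  exists C : X, is_bary_argmin d q w b' C /\ bary_cost d q w b' C <= bound.

Definition move_cost (R : realType) (X : Type) (d : X -> X -> R) (q : R)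
    (K : nat) (w : 'I_K -> R) (a b' : 'I_K -> X) : R :=
  \sum_(s < K) w s * powR (d (b' s) (a s)) q.

From mathcomp Require Import all_boot all_order all_algebra.
From mathcomp Require Import all_classical all_reals all_analysis.
From mathcomp Require Import ring lra.

(* Put beta := alpha^(1/q) and let S be the optimal cost of a. The hypotheses
   place b_s on a geodesic from a_s to C_a with d(b_s, C_a) = beta d(a_s, C_a),
   so b costs alpha S at C_a and moving a to b costs (1 - beta)^q S.
   Conversely, if b' admits a point C' of cost V <= alpha S and U is the cost of
   moving a to b', then minimality of C_a, the triangle inequality through b'_s
   and the convexity bound (x + y)^q <= t^(1-q) x^q + (1-t)^(1-q) y^q with
   t = 1 - beta give S <= (1 - beta)^(1-q) U + beta^(1-q) V
   <= (1 - beta)^(1-q) U + beta S, that is (1 - beta)^q S <= U. *)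

Set Implicit Arguments.
Unset Strict Implicit.
Unset Printing Implicit Defensive.
Import Order.TTheory GRing.Theory Num.Theory.
Local Open Scope ring_scope.

Lemma powRV (R : realType) (x p : R) : 0 <= x -> (x^-1) `^ p = (x `^ p)^-1.
Proof. by move=> x0; rewrite -powR_inv1 // powRAC powR_inv1 // powR_ge0. Qed.

Lemma powR_div (R : realType) (x y p : R) : 0 <= x -> 0 <= y ->
  (x / y) `^ p = x `^ p / y `^ p.
Proof. by move=> x0 y0; rewrite powRM ?invr_ge0 // powRV. Qed.

Lemma powR_invpK (R : realType) (x p : R) : 0 <= x -> 0 < p ->
  (x `^ (1 / p)) `^ p = x.
Proof. by move=> x0 p0; rewrite -powRrM mul1r mulVf ?gt_eqF // powRr1. Qed.

Lemma convex_powR_add (R : realType) (p t x y : R) : 1 <= p -> 0 < t < 1 ->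
  0 <= x -> 0 <= y ->
  (x + y) `^ p <= t / t `^ p * x `^ p + (1 - t) / (1 - t) `^ p * y `^ p.
Proof.
move=> p1 /andP[t0 t1] x0 y0.
have t'0 : 0 < 1 - t by rewrite subr_gt0.
have -> : x + y = t * (x / t) + (1 - t) * (y / (1 - t)).
  by field; rewrite ?gt_eqF.
have in_nneg (u v : R) : 0 <= u -> 0 < v -> u / v \in `[0, +oo[%classic.
  by move=> u0 v0; rewrite inE /= in_itv /= andbT divr_ge0 // ltW.
apply: le_trans (convex_powR p1 (Itv01 (ltW t0) (ltW t1)) (in_nneg _ _ x0 t0)
  (in_nneg _ _ y0 t'0)) _.
rewrite convRE /= /unstable.onem !powR_div ?(ltW t0) ?(ltW t'0) //.
by rewrite !mulrA [t / _ * _]mulrAC [(1 - t) / _ * _]mulrAC.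
Qed.

Section WeightedCosts.
Variables (R : realType) (X : Type) (d : X -> X -> R) (q : R) (K : nat).
Variable w : 'I_K -> R.
Hypotheses (q_ge1 : 1 <= q) (d_metric : is_metric d).
Hypothesis w_ge0 : forall s, 0 <= w s.

Lemma weighted_powR_sumZ (k : R) (f g : 'I_K -> R) :
  0 <= k -> (forall s, 0 <= f s) -> (forall s, g s = k * f s) ->
  \sum_(s < K) w s * g s `^ q = k `^ q * \sum_(s < K) w s * f s `^ q.
Proof.
move=> k0 f0 gE; rewrite mulr_sumr; apply: eq_bigr => s _.
by rewrite gE powRM // mulrCA.
Qed.

Lemma move_cost_ge0 (a b : 'I_K -> X) : 0 <= move_cost d q w a b.
Proof. by apply: sumr_ge0 => s _; rewrite mulr_ge0 ?powR_ge0. Qed.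

Lemma bary_cost_ge0 (a : 'I_K -> X) (C : X) : 0 <= bary_cost d q w a C.
Proof. by apply: sumr_ge0 => s _; rewrite mulr_ge0 ?powR_ge0. Qed.

Lemma bary_cost_le_move_add_bary (t : R) (a b : 'I_K -> X) (C : X) : 0 < t < 1 ->
  bary_cost d q w a C <=
  t / t `^ q * move_cost d q w a b + (1 - t) / (1 - t) `^ q * bary_cost d q w b C.
Proof.
move=> t01; have [d_ge0 [_ [dC dT]]] := d_metric.
rewrite /bary_cost /move_cost !mulr_sumr -big_split; apply: ler_sum => s _.
have tri : d (a s) C <= d (b s) (a s) + d (b s) C by rewrite (dC (b s)); apply: dT.
apply: le_trans (ler_wpM2l (w_ge0 s) (ge0_ler_powR _ _ _ tri)) _;
  rewrite ?nnegrE ?addr_ge0 ?(le_trans _ q_ge1) //.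
rewrite /= mulrCA [_ / _ * (w s * _)]mulrCA -mulrDr; apply: ler_wpM2l => //.
exact: convex_powR_add.
Qed.

Lemma bary_cost_le_move_cost (a b : 'I_K -> X) (C : X) :
  bary_cost d q w b C <= 0 -> bary_cost d q w a C <= move_cost d q w a b.
Proof.
move=> b_cost0; have [_ [dE [dC _]]] := d_metric.
have term_ge0 s : 0 <= w s * d (b s) C `^ q by rewrite mulr_ge0 ?powR_ge0.
have b_cost_eq0 : bary_cost d q w b C = 0.
  by apply/le_anti; rewrite b_cost0 bary_cost_ge0.
have term0 := psumr_eq0P (fun s _ => term_ge0 s) b_cost_eq0.
rewrite /bary_cost /move_cost; apply: ler_sum => s _.
have [-> | ws_neq0] := eqVneq (w s) 0; first by rewrite !mul0r.
move/eqP: (term0 s isT); rewrite mulf_eq0 (negbTE ws_neq0) /=.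
by move=> /eqP /powR_eq0_eq0 /dE ->; rewrite dC.
Qed.

Lemma move_cost_lower_bound (a b : 'I_K -> X) (Ca C : X) (beta : R) :
  is_bary_argmin d q w a Ca -> 0 <= beta <= 1 ->
  bary_cost d q w b C <= beta `^ q * bary_cost d q w a Ca ->
  (1 - beta) `^ q * bary_cost d q w a Ca <= move_cost d q w a b.
Proof.
move=> Ca_min /andP[beta_ge0 beta_le1] b_cost.
have q_neq0 : q != 0 by rewrite gt_eqF ?(lt_le_trans _ q_ge1).
have [-> | beta_neq1] := eqVneq beta 1.
  by rewrite subrr powR0 // mul0r move_cost_ge0.
(* At beta = 0 the convexity bound degenerates; instead b' collapses onto C
   wherever w is positive. *)
have [beta0 | beta_neq0] := eqVneq beta 0.
  move: b_cost; rewrite beta0 subr0 powR1 mul1r powR0 // mul0r.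
  by move/(bary_cost_le_move_cost a); apply: le_trans.
have beta_gt0 : 0 < beta by rewrite lt_neqAle eq_sym beta_neq0.
have t_gt0 : 0 < 1 - beta by rewrite subr_gt0 lt_neqAle beta_neq1.
have t01 : 0 < 1 - beta < 1 by rewrite t_gt0 gtrBl.
set S := bary_cost d q w a Ca; set U := move_cost d q w a b.
set V := bary_cost d q w b C; set T := (1 - beta) `^ q.
have := le_trans (Ca_min C) (bary_cost_le_move_add_bary a b C t01).
rewrite subKr -/S -/U -/V -/T => S_le.
have V_le : beta / beta `^ q * V <= beta * S.
  apply: le_trans (ler_wpM2l _ b_cost) _; first by rewrite divr_ge0 ?powR_ge0.
  by rewrite mulrA divfK // gt_eqF ?powR_gt0.
have T_gt0 : 0 < T by rewrite powR_gt0.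
rewrite -ler_pdivlMl //.
have : (1 - beta) * S <= (1 - beta) * (T^-1 * U) by lra.
by rewrite ler_pM2l.
Qed.

End WeightedCosts.

Theorem lemma22 (R : realType) (q : R) (X : Type) (d : X -> X -> R)
  (K : nat) (w : 'I_K -> R) (a b : 'I_K -> X) (Ca : X) (alpha : R) :
  1 <= q ->
  is_metric d ->
  q_barycenter_property d q ->
  (1 <= K)%N ->
  in_simplex w ->
  is_bary_argmin d q w a Ca ->
  0 <= alpha <= 1 ->
  (forall s, d (a s) Ca = d (a s) (b s) + d (b s) Ca) ->
  (forall s, d (b s) (a s) = (1 - powR alpha (1 / q)) * d (a s) Ca) ->
  feasible d q w (alpha * bary_cost d q w a Ca) b /\
  (forall b' : 'I_K -> X, feasible d q w (alpha * bary_cost d q w a Ca) b' ->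
     move_cost d q w a b <= move_cost d q w a b').
Proof.
move=> q_ge1 d_metric q_bary K_gt0 [w_ge0 w_sum1] Ca_min /andP[alpha_ge0 alpha_le1]
  b_between b_to_a.
have [d_ge0 [_ [dC _]]] := d_metric.
have q_gt0 : 0 < q by apply: lt_le_trans q_ge1.
set beta := alpha `^ (1 / q) in b_to_a.
have beta_q : beta `^ q = alpha by apply: powR_invpK.
have beta_le1 : beta <= 1.
  have <- : 1 `^ (1 / q) = 1 :> R by rewrite powR1.
  by apply: ge0_ler_powR; rewrite ?nnegrE // divr_ge0 // ltW.
have b_to_Ca s : d (b s) Ca = beta * d (a s) Ca.
  by have := b_between s; rewrite (dC (a s) (b s)) b_to_a; lra.
have cost_b : bary_cost d q w b Ca = alpha * bary_cost d q w a Ca.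
  by rewrite -beta_q; apply: weighted_powR_sumZ; rewrite ?powR_ge0.
have move_b : move_cost d q w a b = (1 - beta) `^ q * bary_cost d q w a Ca.
  by apply: weighted_powR_sumZ; rewrite ?subr_ge0.
split.
  have [C C_min] := q_bary K w b K_gt0 (conj w_ge0 w_sum1).
  by exists C; split => //; rewrite -cost_b; apply: C_min.
move=> b' [C [_]]; rewrite -beta_q move_b => b'_cost.
by apply: (move_cost_lower_bound q_ge1 d_metric w_ge0 Ca_min _ b'_cost);
  rewrite powR_ge0 beta_le1.
Qed.
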